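(* Let $k\in\{1,2\}$, $\xi\in\mathbb{C}$, $f:\mathbb{N}\to[0,\infty)$, and $A=\xi(a^\dagger)^k+\xi^*a^k+f(a^\dagger a)$ with domain $\mathcal{D}_0$. Suppose there exists $C>0$ such that $f(n)\le C\beta^{k0}_n$ for all $n\in\mathbb{N}$. Then $A$ is essentially self-adjoint.
   Context: $\mathbb{N}=\{0,1,2,\dots\}$. $\mathcal{H}$ is a separable complex Hilbert space with orthonormal basis $(\phi_n)_{n\in\mathbb{N}}$; $\mathcal{D}_0$ is the set of finite linear combinations of the $\phi_n$. The operators $a,a^\dagger$ have domain $\mathcal{D}_0$ and act by $a\phi_n=\sqrt{n}\,\phi_{n-1}$ ($a\phi_0=0$), $a^\dagger\phi_n=\sqrt{n+1}\,\phi_{n+1}$, extended linearly. $f(a^\dagger a)$ has domain $\mathcal{D}_0$ and $f(a^\dagger a)\phi_n=f(n)\phi_n$. For integers $x\ge1$ and $s\ge0$, $(x,s)=x(x+1)\cdots(x+s-1)$; $\beta^{k0}_n=\sqrt{(n+1,k)}$ (the case $l=0$ of $\beta^{kl}_n=\sqrt{(n-l+1,l)(n-l+1,k)}$). *)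

From Stdlib Require Import Reals.
From Coquelicot Require Import Coquelicot.
Open Scope R_scope.

(* Concrete model of H: l^2(N) over C, with phi_n the n-th unit sequence.
   Vectors are sequences of coordinates x : nat -> C. *)
Definition vec := nat -> C.

Definition l2 (x : vec) : Prop := ex_series (fun n => (Cmod (x n)) ^ 2).

Definition norm2 (x : vec) : R := Series (fun n => (Cmod (x n)) ^ 2).

Definition vsub (x y : vec) : vec := fun n => Cminus (x n) (y n).

Definition inner (x y : vec) : C :=
  (Series (fun n => Re (Cmult (x n) (Cconj (y n)))),
   Series (fun n => Im (Cmult (x n) (Cconj (y n))))).

(* D_0 : finite linear combinations of the phi_n *)
Definition D0 (x : vec) : Prop := exists N : nat, forall n, (N <= n)%nat -> x n = RtoC 0.

(* a phi_n = sqrt n phi_{n-1}, a^dagger phi_n = sqrt (n+1) phi_{n+1}, in coordinates *)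
Definition ann (x : vec) : vec := fun n => Cmult (RtoC (sqrt (INR (S n)))) (x (S n)).
Definition cre (x : vec) : vec := fun n =>
  match n with
  | O => RtoC 0
  | S m => Cmult (RtoC (sqrt (INR n))) (x m)
  end.

(* f(a^dagger a) phi_n = f(n) phi_n *)
Definition numfun (f : nat -> R) (x : vec) : vec := fun n => Cmult (RtoC (f n)) (x n).

Definition Aop (k : nat) (xi : C) (f : nat -> R) (x : vec) : vec := fun n =>
  Cplus (Cplus (Cmult xi (Nat.iter k cre x n))
               (Cmult (Cconj xi) (Nat.iter k ann x n)))
        (numfun f x n).

(* Operators are represented by their graphs (relations on vectors). *)
Definition graph_rel := vec -> vec -> Prop.

Definition A_graph (k : nat) (xi : C) (f : nat -> R) : graph_rel :=
  fun x y => D0 x /\ forall n, y n = Aop k xi f x n.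

Definition closure_op (T : graph_rel) : graph_rel :=
  fun x y => l2 x /\ l2 y /\
    exists (xs ys : nat -> vec),
      (forall m, T (xs m) (ys m)) /\
      is_lim_seq (fun m => norm2 (vsub (xs m) x)) 0 /\
      is_lim_seq (fun m => norm2 (vsub (ys m) y)) 0.

Definition adjoint_op (T : graph_rel) : graph_rel :=
  fun y z => l2 y /\ l2 z /\ forall x w, T x w -> inner w y = inner x z.

Definition self_adjoint (T : graph_rel) : Prop :=
  forall x y, T x y <-> adjoint_op T x y.

Definition ess_self_adjoint (T : graph_rel) : Prop := self_adjoint (closure_op T).

Fixpoint rising (x s : nat) : nat :=
  match s with
  | O => 1%nat
  | S s' => (rising x s' * (x + s'))%nat
  end.

Definition beta_k0 (k n : nat) : R := sqrt (INR (rising (S n) k)).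

(* A is the band matrix with real diagonal f(n) and off-diagonal entries xi^* beta^{k0}_n at
   distance k from the diagonal.  For any such band matrix whose off-diagonal entries grow at
   most linearly, the closure and the adjoint of the operator on D_0 both equal the maximal
   operator y |-> A y on {y in l^2 | A y in l^2}, whatever the diagonal.  The adjoint is computed
   on the basis vectors; for the closure, a vector y of the maximal domain is approximated by its
   truncations c_N y with the piecewise linear cutoff c_N (1 up to N, 0 from 2N on), since the
   commutator of A with c_N has entries |b_i| |c_N(i) - c_N(i+k)| <= K (i+1) k / N = O(1),
   supported on i < 2N. *)

From Stdlib Require Import Reals Lra Lia Psatz FunctionalExtensionality.
From Coquelicot Require Import Coquelicot.
Open Scope R_scope.

Lemma Series_eq_0 (a : nat -> R) : (forall n, a n = 0) -> Series a = 0.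
Proof.
  intros Ha. rewrite (Series_ext a (fun n => 0 * a n)) by (intros n; rewrite Ha; ring).
  rewrite Series_scal_l. ring.
Qed.

Lemma Series_ge_0 (a : nat -> R) : (forall n, 0 <= a n) -> ex_series a -> 0 <= Series a.
Proof.
  intros Ha Hex. rewrite <- (Series_eq_0 (fun _ => 0)) by reflexivity.
  apply Series_le; auto. intros n; split; [lra | auto].
Qed.

Lemma ex_series_eventually_0 (a : nat -> R) (N : nat) :
  (forall n, (N <= n)%nat -> a n = 0) -> ex_series a.
Proof.
  intros Ha. apply (ex_series_incr_n a N). exists 0.
  apply (filterlim_ext (fun _ => 0)). 2: apply filterlim_const.
  intros n. rewrite (sum_n_ext _ (fun _ => 0)) by (intros j; apply Ha; lia).
  rewrite sum_n_const. simpl; ring.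
Qed.

Lemma Series_single (a : nat -> R) (n : nat) : (forall j, j <> n -> a j = 0) -> Series a = a n.
Proof.
  intros Ha. rewrite (Series_incr_n_aux a n) by (intros j Hj; apply Ha; lia).
  rewrite Series_incr_1.
  - rewrite Series_eq_0 by (intros j; apply Ha; lia). rewrite Nat.add_0_r; ring.
  - apply (ex_series_eventually_0 _ 1). intros j Hj; apply Ha; lia.
Qed.

Lemma ex_series_shift_down (a : nat -> R) (k : nat) :
  ex_series a -> ex_series (fun j => if (k <=? j)%nat then a (j - k)%nat else 0).
Proof.
  intros Ha. apply (ex_series_incr_n _ k). apply (ex_series_ext a); auto.
  intros j. rewrite (proj2 (Nat.leb_le k (k + j))) by lia. f_equal; lia.
Qed.

Lemma ex_series_shift_up (a : nat -> R) (k : nat) :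
  ex_series a -> ex_series (fun j => a (j + k)%nat).
Proof.
  intros Ha. apply (ex_series_ext (fun j => a (k + j)%nat)).
  - intros j; f_equal; lia.
  - now apply ex_series_incr_n.
Qed.

Lemma is_lim_seq_Series_tail (a : nat -> R) :
  ex_series a -> is_lim_seq (fun m => Series (fun j => a (m + j)%nat)) 0.
Proof.
  intros Ha. apply is_lim_seq_incr_1.
  apply (is_lim_seq_ext (fun m => Series a - sum_n a m)).
  - intros m. rewrite (Series_incr_n a (S m)) by (lia || auto).
    rewrite sum_n_Reals. simpl; ring.
  - replace 0 with (Series a - Series a) by ring.
    apply is_lim_seq_minus'. apply is_lim_seq_const. apply (Series_correct a Ha).
Qed.

Lemma ex_series_nonneg_le (a b : nat -> R) :
  (forall n, 0 <= a n <= b n) -> ex_series b -> ex_series a.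
Proof.
  intros Hab Hb. apply (ex_series_le a b); auto.
  intros n. change (Rabs (a n) <= b n). rewrite Rabs_pos_eq; apply Hab.
Qed.

Lemma is_lim_seq_Series_dominated (h : nat -> nat -> R) (a : nat -> R) :
  ex_series a -> (forall m j, 0 <= h m j <= a j) -> (forall m j, (j < m)%nat -> h m j = 0) ->
  is_lim_seq (fun m => Series (h m)) 0.
Proof.
  intros Ha Hdom Hhead.
  apply (is_lim_seq_le_le (fun _ => 0) _ (fun m => Series (fun j => a (m + j)%nat))).
  2: apply is_lim_seq_const. 2: now apply is_lim_seq_Series_tail.
  intros m. rewrite (Series_incr_n_aux (h m) m) by (intros; now apply Hhead).
  assert (Hex : ex_series (fun j => a (m + j)%nat)) by now apply ex_series_incr_n.
  split.
  - apply Series_ge_0. intros j; apply Hdom.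
    apply (ex_series_nonneg_le _ _ (fun j => Hdom m (m + j)%nat) Hex).
  - apply Series_le; auto.
Qed.

Lemma ex_series_lin_comb (a b : nat -> R) (al be : R) :
  ex_series a -> ex_series b -> ex_series (fun n => al * a n + be * b n).
Proof.
  intros Ha Hb. apply (ex_series_plus (fun n => al * a n) (fun n => be * b n)).
  - exact (ex_series_scal_l al a Ha).
  - exact (ex_series_scal_l be b Hb).
Qed.

Lemma Series_lin_comb (a b : nat -> R) (al be : R) : ex_series a -> ex_series b ->
  Series (fun n => al * a n + be * b n) = al * Series a + be * Series b.
Proof.
  intros Ha Hb. rewrite Series_plus, !Series_scal_l; auto.
  - exact (ex_series_scal_l al a Ha).
  - exact (ex_series_scal_l be b Hb).
Qed.

Ltac C_eq :=
  apply injective_projections;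
  unfold Cminus, Cplus, Cmult, Copp, Cconj, RtoC, Re, Im; cbn [fst snd]; ring.

Definition vanishes_from (N : nat) (p : nat -> C) : Prop := forall n, (N <= n)%nat -> p n = 0.

Definition cSeries (p : nat -> C) : C := (Series (fun n => Re (p n)), Series (fun n => Im (p n))).

Lemma inner_cSeries (x y : vec) : inner x y = cSeries (fun n => (x n * Cconj (y n))%C).
Proof. reflexivity. Qed.

Lemma cSeries_ext (p q : nat -> C) : (forall n, p n = q n) -> cSeries p = cSeries q.
Proof.
  intros Hpq. unfold cSeries. f_equal; apply Series_ext; intros n; now rewrite Hpq.
Qed.

Lemma cSeries_plus (p q : nat -> C) (N : nat) : vanishes_from N p -> vanishes_from N q ->
  cSeries (fun n => (p n + q n)%C) = (cSeries p + cSeries q)%C.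
Proof.
  intros Hp Hq.
  assert (Hre : forall r, vanishes_from N r -> ex_series (fun n => Re (r n))).
  { intros r Hr. apply (ex_series_eventually_0 _ N). intros n Hn; now rewrite Hr. }
  assert (Him : forall r, vanishes_from N r -> ex_series (fun n => Im (r n))).
  { intros r Hr. apply (ex_series_eventually_0 _ N). intros n Hn; now rewrite Hr. }
  unfold cSeries. apply injective_projections; simpl; rewrite <- Series_plus by auto;
    apply Series_ext; intros n; [apply re_plus | apply im_plus].
Qed.

Lemma cSeries_incr_n (p : nat -> C) (N : nat) : (forall n, (n < N)%nat -> p n = 0) ->
  cSeries p = cSeries (fun n => p (N + n)%nat).
Proof.
  intros Hp. unfold cSeries.
  f_equal; [apply (Series_incr_n_aux (fun n => Re (p n)))
          | apply (Series_incr_n_aux (fun n => Im (p n)))];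
    intros n Hn; now rewrite Hp.
Qed.

Lemma cSeries_single (p : nat -> C) (n : nat) : (forall j, j <> n -> p j = 0) -> cSeries p = p n.
Proof.
  intros Hp. unfold cSeries.
  rewrite !(Series_single _ n) by (intros j Hj; now rewrite Hp).
  now destruct (p n).
Qed.

Lemma inner_conj (u v : vec) : inner u v = Cconj (inner v u).
Proof.
  unfold inner, Cconj. simpl. f_equal.
  - apply Series_ext. intros; unfold Re; simpl; ring.
  - rewrite <- Series_opp. apply Series_ext. intros; unfold Im; simpl; ring.
Qed.

Lemma inner_plus_l (u1 u2 v : vec) (N : nat) : vanishes_from N u1 -> vanishes_from N u2 ->
  inner (fun n => (u1 n + u2 n)%C) v = (inner u1 v + inner u2 v)%C.
Proof.
  intros H1 H2. rewrite !inner_cSeries, <- (cSeries_plus _ _ N).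
  - apply cSeries_ext. intros n. C_eq.
  - intros n Hn. rewrite H1 by auto. C_eq.
  - intros n Hn. rewrite H2 by auto. C_eq.
Qed.

Lemma inner_plus_r (u v1 v2 : vec) (N : nat) : vanishes_from N u ->
  inner u (fun n => (v1 n + v2 n)%C) = (inner u v1 + inner u v2)%C.
Proof.
  intros Hu. rewrite !inner_cSeries, <- (cSeries_plus _ _ N).
  - apply cSeries_ext. intros n. C_eq.
  - intros n Hn. rewrite Hu by auto. C_eq.
  - intros n Hn. rewrite Hu by auto. C_eq.
Qed.

Definition basis (n : nat) : vec := fun j => if Nat.eqb j n then 1 else 0.

Lemma basis_vanishes_from (n : nat) : vanishes_from (S n) (basis n).
Proof. intros j Hj. unfold basis. destruct (Nat.eqb_spec j n); auto; lia. Qed.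

Lemma inner_basis_l (n : nat) (v : vec) : inner (basis n) v = Cconj (v n).
Proof.
  rewrite inner_cSeries, (cSeries_single _ n); unfold basis.
  - rewrite Nat.eqb_refl. C_eq.
  - intros j Hj. apply Nat.eqb_neq in Hj. rewrite Hj. C_eq.
Qed.

Lemma inner_basis_r (v : vec) (n : nat) : inner v (basis n) = v n.
Proof. now rewrite inner_conj, inner_basis_l, Cconj_conj. Qed.

Lemma norm2_ge_0 (x : vec) : l2 x -> 0 <= norm2 x.
Proof. intros Hx. apply Series_ge_0; auto. intros n; apply pow2_ge_0. Qed.

Lemma Cmod_mult_le (a c : C) (r : R) : 0 < r ->
  Cmod a * Cmod c <= r / 2 * Cmod a ^ 2 + / (2 * r) * Cmod c ^ 2.
Proof.
  intros Hr. assert (Hsq : 0 <= (r * Cmod a - Cmod c) ^ 2 / (2 * r)).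
  { apply Rdiv_le_0_compat; [apply pow2_ge_0 | lra]. }
  replace ((r * Cmod a - Cmod c) ^ 2 / (2 * r))
    with (r / 2 * Cmod a ^ 2 + / (2 * r) * Cmod c ^ 2 - Cmod a * Cmod c) in Hsq by (field; lra).
  lra.
Qed.

Lemma Cmod_minus_sqr_le (a c : C) : Cmod (a - c)%C ^ 2 <= 2 * Cmod a ^ 2 + 2 * Cmod c ^ 2.
Proof.
  assert (Cmod (a - c)%C <= Cmod a + Cmod c).
  { unfold Cminus. rewrite <- (Cmod_opp c). apply Cmod_triangle. }
  pose proof (Cmod_ge_0 (a - c)%C). pose proof (Cmod_ge_0 a). pose proof (Cmod_ge_0 c).
  pose proof (pow2_ge_0 (Cmod a - Cmod c)). nra.
Qed.

Lemma l2_vsub (x y : vec) : l2 x -> l2 y -> l2 (vsub x y).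
Proof.
  intros Hx Hy.
  apply (ex_series_nonneg_le _ _ (fun n => conj (pow2_ge_0 _) (Cmod_minus_sqr_le (x n) (y n)))).
  now apply ex_series_lin_comb.
Qed.

Section InnerContinuity.

Variable g : C -> R.
Hypothesis g_minus : forall a c, g (a - c)%C = g a - g c.
Hypothesis g_le_Cmod : forall a, Rabs (g a) <= Cmod a.

Lemma Rabs_g_inner_le (a c : C) (r : R) : 0 < r ->
  Rabs (g (a * Cconj c)%C) <= r / 2 * Cmod a ^ 2 + / (2 * r) * Cmod c ^ 2.
Proof.
  intros Hr. eapply Rle_trans; [apply g_le_Cmod|].
  rewrite Cmod_mult, Cmod_conj. now apply Cmod_mult_le.
Qed.

Lemma Series_g_inner_le (u v : vec) (r : R) : l2 u -> l2 v -> 0 < r ->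
  Rabs (Series (fun j => g (u j * Cconj (v j))%C)) <= r / 2 * norm2 u + / (2 * r) * norm2 v.
Proof.
  intros Hu Hv Hr. unfold norm2. rewrite <- Series_lin_comb by auto.
  assert (Hb := ex_series_lin_comb _ _ (r / 2) (/ (2 * r)) Hu Hv).
  eapply Rle_trans; [apply Series_Rabs|apply Series_le; auto].
  - apply (ex_series_nonneg_le _ _
      (fun j => conj (Rabs_pos _) (Rabs_g_inner_le (u j) (v j) r Hr)) Hb).
  - intros j; split; [apply Rabs_pos | now apply Rabs_g_inner_le].
Qed.

Lemma is_lim_seq_Series_g_inner (u : nat -> vec) (w v : vec) :
  (forall m, l2 (u m)) -> l2 w -> l2 v ->
  is_lim_seq (fun m => norm2 (vsub (u m) w)) 0 ->
  is_lim_seq (fun m => Series (fun j => g (u m j * Cconj (v j))%C))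
             (Series (fun j => g (w j * Cconj (v j))%C)).
Proof.
  intros Hu Hw Hv Hlim. apply is_lim_seq_Reals. apply is_lim_seq_Reals in Hlim.
  intros eps Heps. set (B := norm2 v).
  (* The sum is at most (r D + B / r) / 2 with D = norm2 (u m - w); this r makes B / r < eps. *)
  assert (HB : 0 <= B) by now apply norm2_ge_0.
  set (r := (B + 1) / eps).
  assert (Hr : 0 < r) by (unfold r; apply Rdiv_lt_0_compat; lra).
  destruct (Hlim (eps / r)) as [N HN]; [apply Rdiv_lt_0_compat; lra|].
  exists N. intros m Hm. specialize (HN m Hm). unfold R_dist in *.
  assert (Hex : forall x, l2 x -> ex_series (fun j => g (x j * Cconj (v j))%C)).
  { intros x Hx. eapply ex_series_Rabs, ex_series_nonneg_le.
    - intros j. split; [apply Rabs_pos | apply (Rabs_g_inner_le _ _ 1); lra].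
    - now apply ex_series_lin_comb. }
  rewrite <- Series_minus by auto.
  rewrite (Series_ext _ (fun j => g (vsub (u m) w j * Cconj (v j))%C)).
  2:{ intros j. unfold vsub. rewrite <- g_minus. f_equal. ring. }
  eapply Rle_lt_trans; [apply (Series_g_inner_le _ _ r); auto; now apply l2_vsub|].
  set (D := norm2 (vsub (u m) w)) in *.
  assert (HD : 0 <= D) by (apply norm2_ge_0, l2_vsub; auto).
  rewrite Rminus_0_r, Rabs_pos_eq in HN by auto.
  assert (r * D < eps).
  { apply (Rmult_lt_compat_l r) in HN; auto.
    replace (r * (eps / r)) with eps in HN by (field; lra). lra. }
  assert (B / r < eps).
  { unfold r. replace (B / ((B + 1) / eps)) with (eps - eps / (B + 1)) by (field; lra).
    assert (0 < eps / (B + 1)) by (apply Rdiv_lt_0_compat; lra). lra. }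
  fold B. replace (r / 2 * D + / (2 * r) * B) with ((r * D + B / r) / 2) by (field; lra). lra.
Qed.

End InnerContinuity.

Lemma is_lim_seq_ext_eq (u v : nat -> R) (l l' : R) :
  (forall n, u n = v n) -> is_lim_seq u l -> is_lim_seq v l' -> l = l'.
Proof.
  intros Huv Hu Hv. apply (is_lim_seq_ext _ _ _ Huv), is_lim_seq_unique in Hu.
  apply is_lim_seq_unique in Hv. rewrite Hu in Hv. now injection Hv.
Qed.

Lemma Rabs_Im_le_Cmod (a : C) : Rabs (Im a) <= Cmod a.
Proof. eapply Rle_trans; [apply Rmax_r | apply Rmax_Cmod]. Qed.

Lemma inner_eq_of_lim (u u' : nat -> vec) (w w' v v' : vec) :
  (forall m, l2 (u m)) -> (forall m, l2 (u' m)) -> l2 w -> l2 w' -> l2 v -> l2 v' ->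
  is_lim_seq (fun m => norm2 (vsub (u m) w)) 0 -> is_lim_seq (fun m => norm2 (vsub (u' m) w')) 0 ->
  (forall m, inner (u m) v = inner (u' m) v') -> inner w v = inner w' v'.
Proof.
  intros Hu Hu' Hw Hw' Hv Hv' Hlim Hlim' Heq.
  assert (Hre_minus : forall a c, Re (a - c)%C = Re a - Re c).
  { intros a c. unfold Cminus. now rewrite re_plus, re_opp. }
  assert (Him_minus : forall a c, Im (a - c)%C = Im a - Im c).
  { intros a c. unfold Cminus. now rewrite im_plus, im_opp. }
  unfold inner. f_equal.
  - apply (is_lim_seq_ext_eq _ _ _ _ (fun m => f_equal fst (Heq m)));
      apply (is_lim_seq_Series_g_inner Re Hre_minus re_le_Cmod); auto.
  - apply (is_lim_seq_ext_eq _ _ _ _ (fun m => f_equal snd (Heq m)));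
      apply (is_lim_seq_Series_g_inner Im Him_minus Rabs_Im_le_Cmod); auto.
Qed.

Lemma l2_vanishes_from (x : vec) (N : nat) : vanishes_from N x -> l2 x.
Proof.
  intros Hx. apply (ex_series_eventually_0 _ N). intros n Hn. rewrite Hx, Cmod_0 by auto. ring.
Qed.

Lemma closure_op_extends (T : graph_rel) : (forall x y, T x y -> l2 x /\ l2 y) ->
  forall x y, T x y -> closure_op T x y.
Proof.
  intros HT x y Hxy. destruct (HT x y Hxy) as [Hx Hy].
  assert (Hself : forall v : vec, norm2 (vsub v v) = 0).
  { intros v. apply Series_eq_0. intros n. unfold vsub.
    replace (v n - v n)%C with (RtoC 0) by C_eq. rewrite Cmod_0. ring. }
  split; [|split]; auto. exists (fun _ => x), (fun _ => y).
  split; [|split]; auto; rewrite Hself; apply is_lim_seq_const.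
Qed.

Section BandOperator.

Variables (k : nat) (b : nat -> C) (d : nat -> R).

Definition lower (x : vec) : vec :=
  fun n => if (k <=? n)%nat then (Cconj (b (n - k)%nat) * x (n - k)%nat)%C else 0.

Definition upper (x : vec) : vec := fun n => (b n * x (n + k)%nat)%C.

Definition band (x : vec) : vec := fun n => (lower x n + numfun d x n + upper x n)%C.

Definition band_graph : graph_rel := fun x y => D0 x /\ forall n, y n = band x n.

Definition band_max : graph_rel := fun y z => l2 y /\ l2 z /\ z = band y.

Lemma band_vanishes_from (N : nat) (x : vec) : vanishes_from N x -> vanishes_from (N + k) (band x).
Proof.
  intros Hx n Hn. unfold band, lower, numfun, upper.
  rewrite !Hx by lia. destruct (k <=? n)%nat; C_eq.
Qed.

Lemma inner_lower (u v : vec) : inner (lower u) v = inner u (upper v).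
Proof.
  rewrite !inner_cSeries, (cSeries_incr_n _ k).
  - apply cSeries_ext. intros n. unfold lower, upper.
    rewrite (proj2 (Nat.leb_le k (k + n))) by lia.
    replace (k + n - k)%nat with n by lia. rewrite (Nat.add_comm k n). C_eq.
  - intros n Hn. unfold lower. rewrite (proj2 (Nat.leb_gt k n)) by lia. C_eq.
Qed.

Lemma inner_upper (u v : vec) : inner (upper u) v = inner u (lower v).
Proof.
  rewrite !inner_cSeries, (cSeries_incr_n (fun n => (u n * Cconj (lower v n))%C) k).
  - apply cSeries_ext. intros n. unfold lower, upper.
    rewrite (proj2 (Nat.leb_le k (k + n))) by lia.
    replace (k + n - k)%nat with n by lia. rewrite (Nat.add_comm k n). C_eq.
  - intros n Hn. unfold lower. rewrite (proj2 (Nat.leb_gt k n)) by lia. C_eq.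
Qed.

Lemma inner_numfun (u v : vec) : inner (numfun d u) v = inner u (numfun d v).
Proof.
  rewrite !inner_cSeries. apply cSeries_ext. intros n. unfold numfun. C_eq.
Qed.

Lemma inner_band (N : nat) (u v : vec) : vanishes_from N u -> inner (band u) v = inner u (band v).
Proof.
  intros Hu.
  assert (Hl : vanishes_from (N + k) (lower u)).
  { intros n Hn. unfold lower. destruct (k <=? n)%nat; [rewrite Hu by lia|]; C_eq. }
  assert (Hd : vanishes_from (N + k) (numfun d u)).
  { intros n Hn. unfold numfun. rewrite Hu by lia. C_eq. }
  assert (Hr : vanishes_from (N + k) (upper u)).
  { intros n Hn. unfold upper. rewrite Hu by lia. C_eq. }
  unfold band at 1.
  rewrite (inner_plus_l _ _ _ (N + k)), (inner_plus_l _ _ _ (N + k)) by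
    (auto; intros n Hn; rewrite Hl, Hd by auto; C_eq).
  unfold band. rewrite !(inner_plus_r _ _ _ N) by auto.
  rewrite inner_lower, inner_upper, inner_numfun. ring.
Qed.

Lemma band_graph_l2 (x y : vec) : band_graph x y -> l2 x /\ l2 y.
Proof.
  intros [[N Hx] Hy]. split; [apply (l2_vanishes_from _ N Hx)|].
  apply (l2_vanishes_from _ (N + k)). intros n Hn. rewrite Hy. now apply (band_vanishes_from N).
Qed.

Lemma closure_band_inner (x w y z : vec) :
  closure_op band_graph x w -> band_max y z -> inner w y = inner x z.
Proof.
  intros [Hx [Hw [xs [ys [Hgraph [Hxs Hys]]]]]] [Hy [Hz ->]].
  apply (inner_eq_of_lim ys xs); auto; try (intros m; now apply (band_graph_l2 _ _ (Hgraph m))).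
  intros m. destruct (Hgraph m) as [[N HN] Hym].
  replace (ys m) with (band (xs m)) by (apply functional_extensionality; auto).
  now apply (inner_band N).
Qed.

Lemma closure_band_sub_max (x w : vec) : closure_op band_graph x w -> band_max x w.
Proof.
  intros Hxw. pose proof Hxw as [Hx [Hw _]]. split; [|split]; auto.
  apply functional_extensionality. intros n.
  assert (He : band_max (basis n) (band (basis n))).
  { split; [apply (l2_vanishes_from _ _ (basis_vanishes_from n))|split; auto].
    apply (l2_vanishes_from _ (S n + k)), band_vanishes_from, basis_vanishes_from. }
  rewrite <- (inner_basis_r w n), (closure_band_inner x w _ _ Hxw He).
  rewrite inner_conj, (inner_band (S n)) by apply basis_vanishes_from.
  now rewrite inner_basis_l, Cconj_conj.
Qed.

Lemma adjoint_closure_band_sub_max (y z : vec) :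
  adjoint_op (closure_op band_graph) y z -> band_max y z.
Proof.
  intros [Hy [Hz Hadj]]. split; [|split]; auto.
  apply functional_extensionality. intros n.
  assert (He : band_graph (basis n) (band (basis n))).
  { split; auto. exists (S n). apply basis_vanishes_from. }
  specialize (Hadj _ _ (closure_op_extends _ band_graph_l2 _ _ He)).
  rewrite (inner_band (S n)), !inner_basis_l in Hadj by apply basis_vanishes_from.
  rewrite <- (Cconj_conj (z n)), <- Hadj. apply Cconj_conj.
Qed.

Lemma band_max_sub_adjoint_closure (y z : vec) :
  band_max y z -> adjoint_op (closure_op band_graph) y z.
Proof.
  intros Hyz. pose proof Hyz as [Hy [Hz _]]. split; [|split]; auto.
  intros x w Hxw. now apply closure_band_inner.
Qed.

End BandOperator.

Definition cutoff (N j : nat) : R := Rmax 0 (Rmin 1 ((2 * INR N - INR j) / INR N)).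

Definition truncate (N : nat) (y : vec) : vec := fun j => (RtoC (cutoff N j) * y j)%C.

Lemma cutoff_bounds (N j : nat) : 0 <= cutoff N j <= 1.
Proof. unfold cutoff, Rmax, Rmin. repeat destruct Rle_dec; lra. Qed.

Lemma cutoff_eq_1 (N j : nat) : (0 < N)%nat -> (j <= N)%nat -> cutoff N j = 1.
Proof.
  intros HN Hj. apply lt_0_INR in HN. apply le_INR in Hj.
  assert (1 <= (2 * INR N - INR j) / INR N).
  { apply (Rmult_le_reg_r (INR N)); auto. unfold Rdiv. rewrite Rmult_assoc, Rinv_l; lra. }
  unfold cutoff, Rmax, Rmin. repeat destruct Rle_dec; lra.
Qed.

Lemma cutoff_eq_0 (N j : nat) : (0 < N)%nat -> (2 * N <= j)%nat -> cutoff N j = 0.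
Proof.
  intros HN Hj. apply lt_0_INR in HN. apply le_INR in Hj. rewrite mult_INR in Hj. simpl in Hj.
  assert ((2 * INR N - INR j) / INR N <= 0).
  { apply (Rmult_le_reg_r (INR N)); auto. unfold Rdiv. rewrite Rmult_assoc, Rinv_l; lra. }
  unfold cutoff, Rmax, Rmin. repeat destruct Rle_dec; lra.
Qed.

Lemma cutoff_lipschitz (N i k : nat) : (0 < N)%nat ->
  Rabs (cutoff N i - cutoff N (i + k)) * INR N <= INR k.
Proof.
  intros HN. apply lt_0_INR in HN.
  assert (Hclamp : forall p q, Rabs (Rmax 0 (Rmin 1 p) - Rmax 0 (Rmin 1 q)) <= Rabs (p - q)).
  { intros p q. unfold Rmax, Rmin. repeat destruct Rle_dec; apply Rabs_le; split_Rabs; lra. }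
  eapply Rle_trans; [apply Rmult_le_compat_r; [lra | apply Hclamp]|].
  rewrite plus_INR.
  replace ((2 * INR N - INR i) / INR N - (2 * INR N - (INR i + INR k)) / INR N)
    with (INR k / INR N) by (field; lra).
  rewrite Rabs_pos_eq by (apply Rdiv_le_0_compat; [apply pos_INR | lra]).
  right; field; lra.
Qed.

Lemma Cmod_sum3_sqr_le (p q r : C) :
  Cmod (p + q + r)%C ^ 2 <= 3 * Cmod p ^ 2 + 3 * Cmod q ^ 2 + 3 * Cmod r ^ 2.
Proof.
  assert (Cmod (p + q + r)%C <= Cmod p + Cmod q + Cmod r).
  { eapply Rle_trans; [apply Cmod_triangle|]. pose proof (Cmod_triangle p q). lra. }
  pose proof (Cmod_ge_0 (p + q + r)%C). pose proof (Cmod_ge_0 p).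
  pose proof (Cmod_ge_0 q). pose proof (Cmod_ge_0 r).
  pose proof (pow2_ge_0 (Cmod p - Cmod q)). pose proof (pow2_ge_0 (Cmod p - Cmod r)).
  pose proof (pow2_ge_0 (Cmod q - Cmod r)). nra.
Qed.

Lemma Cmod_sqr_le_scale (p q : C) (M : R) :
  Cmod p <= M * Cmod q -> Cmod p ^ 2 <= M ^ 2 * Cmod q ^ 2.
Proof.
  intros H. rewrite <- Rpow_mult_distr. apply pow_incr. split; [apply Cmod_ge_0 | exact H].
Qed.

Lemma truncate_eq (N : nat) (y : vec) (j : nat) :
  (0 < N)%nat -> (j <= N)%nat -> truncate N y j = y j.
Proof. intros HN Hj. unfold truncate. rewrite cutoff_eq_1 by auto. apply Cmult_1_l. Qed.

Lemma truncate_minus_sqr_le (N : nat) (y : vec) (j : nat) :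
  Cmod (truncate N y j - y j)%C ^ 2 <= Cmod (y j) ^ 2.
Proof.
  replace (Cmod (y j) ^ 2) with (1 ^ 2 * Cmod (y j) ^ 2) by ring.
  apply Cmod_sqr_le_scale. unfold truncate.
  replace (cutoff N j * y j - y j)%C with (RtoC (cutoff N j - 1) * y j)%C by C_eq.
  rewrite Cmod_mult, Cmod_R. apply Rmult_le_compat_r; [apply Cmod_ge_0|].
  pose proof (cutoff_bounds N j). apply Rabs_le. lra.
Qed.

Section Truncation.

Variables (k : nat) (b : nat -> C) (d : nat -> R) (K : R).
Hypothesis b_growth : forall n, Cmod (b n) <= K * INR (S n).

Lemma cutoff_commutator_le (N i : nat) : (0 < N)%nat ->
  Cmod (b i) * Rabs (cutoff N i - cutoff N (i + k)) <= 2 * K * INR k.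
Proof.
  intros HN.
  assert (HK : 0 <= K).
  { pose proof (Cmod_ge_0 (b O)). pose proof (b_growth O). simpl in *. lra. }
  assert (Hk := pos_INR k).
  destruct (Nat.le_gt_cases (i + k) N) as [Hin | Hin].
  { rewrite !cutoff_eq_1 by lia. rewrite Rminus_diag, Rabs_R0, Rmult_0_r. nra. }
  destruct (Nat.le_gt_cases (2 * N) i) as [Hout | Hout].
  { rewrite !cutoff_eq_0 by lia. rewrite Rminus_diag, Rabs_R0, Rmult_0_r. nra. }
  assert (Hi : INR (S i) <= 2 * INR N).
  { replace 2 with (INR 2) by reflexivity. rewrite <- mult_INR. apply le_INR. lia. }
  pose proof (cutoff_lipschitz N i k HN). pose proof (Rabs_pos (cutoff N i - cutoff N (i + k))).
  pose proof (Cmod_ge_0 (b i)). pose proof (b_growth i).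
  set (q := Rabs (cutoff N i - cutoff N (i + k))) in *.
  apply (Rle_trans _ (K * INR (S i) * q)); [now apply Rmult_le_compat_r|].
  apply (Rle_trans _ (2 * K * (q * INR N))).
  - replace (2 * K * (q * INR N)) with (K * (2 * INR N) * q) by ring.
    apply Rmult_le_compat_r, Rmult_le_compat_l; auto.
  - apply Rmult_le_compat_l; lra.
Qed.

Lemma band_truncate_minus (N : nat) (y : vec) (j : nat) :
  (band k b d (truncate N y) j - band k b d y j)%C =
  ((if (k <=? j)%nat
    then Cconj (b (j - k)%nat) * RtoC (cutoff N (j - k) - cutoff N j) * y (j - k)%nat
    else 0)
   + b j * RtoC (cutoff N (j + k) - cutoff N j) * y (j + k)%nat
   + RtoC (cutoff N j - 1) * band k b d y j)%C.
Proof. unfold band, lower, upper, numfun, truncate. destruct (k <=? j)%nat; C_eq. Qed.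

Lemma band_truncate_eq (N : nat) (y : vec) (j : nat) : (0 < N)%nat -> (j + k <= N)%nat ->
  band k b d (truncate N y) j = band k b d y j.
Proof.
  intros HN Hj. unfold band, lower, upper, numfun.
  rewrite !truncate_eq by lia. reflexivity.
Qed.

Lemma band_truncate_minus_sqr_le (N : nat) (y : vec) (j : nat) : (0 < N)%nat ->
  Cmod (band k b d (truncate N y) j - band k b d y j)%C ^ 2 <=
  3 * ((2 * K * INR k) ^ 2 * (if (k <=? j)%nat then Cmod (y (j - k)%nat) ^ 2 else 0)
       + (2 * K * INR k) ^ 2 * Cmod (y (j + k)%nat) ^ 2) + 3 * Cmod (band k b d y j) ^ 2.
Proof.
  intros HN. rewrite band_truncate_minus.
  match goal with |- Cmod (?p + ?q + ?r)%C ^ 2 <= 3 * (?P + ?Q) + 3 * ?R =>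
    enough (Cmod p ^ 2 <= P /\ Cmod q ^ 2 <= Q /\ Cmod r ^ 2 <= R)
      by (pose proof (Cmod_sum3_sqr_le p q r); lra) end.
  split; [|split].
  - destruct (Nat.leb_spec k j) as [Hkj | Hkj].
    + apply Cmod_sqr_le_scale. rewrite !Cmod_mult, Cmod_conj, Cmod_R.
      apply Rmult_le_compat_r; [apply Cmod_ge_0|].
      replace (cutoff N j) with (cutoff N (j - k + k)) by (f_equal; lia).
      now apply cutoff_commutator_le.
    + rewrite Cmod_0. simpl; lra.
  - apply Cmod_sqr_le_scale. rewrite !Cmod_mult, Cmod_R, Rabs_minus_sym.
    apply Rmult_le_compat_r; [apply Cmod_ge_0|]. now apply cutoff_commutator_le.
  - replace (Cmod (band k b d y j) ^ 2) with (1 ^ 2 * Cmod (band k b d y j) ^ 2) by ring.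
    apply Cmod_sqr_le_scale. rewrite Cmod_mult, Cmod_R.
    apply Rmult_le_compat_r; [apply Cmod_ge_0|].
    pose proof (cutoff_bounds N j). apply Rabs_le. lra.
Qed.

Lemma band_max_sub_closure (y z : vec) :
  band_max k b d y z -> closure_op (band_graph k b d) y z.
Proof.
  intros [Hy [Hz Hyz]]. split; [|split]; auto.
  (* c_N = 1 on [0, N] with N = m + k + 1, so the m-th error terms vanish below m. *)
  set (xs := fun m => truncate (m + k + 1) y).
  exists xs, (fun m => band k b d (xs m)). split; [|split].
  - intros m. split; auto. exists (2 * (m + k + 1))%nat. intros j Hj.
    unfold xs, truncate. rewrite cutoff_eq_0 by lia. C_eq.
  - apply (is_lim_seq_Series_dominated _ (fun j => Cmod (y j) ^ 2)); auto.
    + intros m j. split; [apply pow2_ge_0 | apply truncate_minus_sqr_le].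
    + intros m j Hj. unfold vsub, xs. rewrite truncate_eq by lia.
      replace (y j - y j)%C with (RtoC 0) by C_eq. rewrite Cmod_0. ring.
  - subst z. set (M := (2 * K * INR k) ^ 2).
    set (L := fun j => if (k <=? j)%nat then Cmod (y (j - k)%nat) ^ 2 else 0).
    set (U := fun j => Cmod (y (j + k)%nat) ^ 2).
    apply (is_lim_seq_Series_dominated _
      (fun j => 3 * (M * L j + M * U j) + 3 * Cmod (band k b d y j) ^ 2)).
    + apply (ex_series_lin_comb (fun j => M * L j + M * U j)); auto.
      apply ex_series_lin_comb; [apply (ex_series_shift_down (fun i => Cmod (y i) ^ 2))
                                | apply (ex_series_shift_up (fun i => Cmod (y i) ^ 2))]; auto.
    + intros m j. split; [apply pow2_ge_0 | apply band_truncate_minus_sqr_le; lia].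
    + intros m j Hj. unfold vsub, xs. rewrite band_truncate_eq by lia.
      replace (band k b d y j - band k b d y j)%C with (RtoC 0) by C_eq. rewrite Cmod_0. ring.
Qed.

End Truncation.

Theorem ess_self_adjoint_band (k : nat) (b : nat -> C) (d : nat -> R) (K : R) :
  (forall n, Cmod (b n) <= K * INR (S n)) -> ess_self_adjoint (band_graph k b d).
Proof.
  intros b_growth x y. split; intros Hxy.
  - apply band_max_sub_adjoint_closure, closure_band_sub_max, Hxy.
  - apply (band_max_sub_closure k b d K b_growth), adjoint_closure_band_sub_max, Hxy.
Qed.

Lemma rising_succ_l (x s : nat) : rising x (S s) = (x * rising (S x) s)%nat.
Proof. induction s as [|s IH]; simpl in *; [lia | rewrite IH; nia]. Qed.

Lemma beta_k0_succ_l (k n : nat) : beta_k0 (S k) n = sqrt (INR (S n)) * beta_k0 k (S n).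
Proof. unfold beta_k0. rewrite rising_succ_l, mult_INR, sqrt_mult; auto using pos_INR. Qed.

Lemma beta_k0_succ_r (k n : nat) : beta_k0 (S k) n = beta_k0 k n * sqrt (INR (S (n + k))).
Proof. unfold beta_k0. simpl rising. rewrite mult_INR, sqrt_mult; auto using pos_INR. Qed.

Lemma iter_ann (k : nat) (x : vec) (n : nat) :
  Nat.iter k ann x n = (beta_k0 k n * x (n + k)%nat)%C.
Proof.
  revert n. induction k as [|k IH]; intros n.
  - unfold beta_k0. simpl. rewrite sqrt_1, Nat.add_0_r. C_eq.
  - simpl Nat.iter. unfold ann at 1. rewrite IH, beta_k0_succ_l.
    replace (n + S k)%nat with (S n + k)%nat by lia. C_eq.
Qed.

Lemma iter_cre (k : nat) (x : vec) (n : nat) :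
  Nat.iter k cre x n = if (k <=? n)%nat then (beta_k0 k (n - k) * x (n - k)%nat)%C else 0.
Proof.
  revert n. induction k as [|k IH]; intros n.
  - unfold beta_k0. simpl. rewrite sqrt_1, Nat.sub_0_r. C_eq.
  - simpl Nat.iter. destruct n as [|m]; [reflexivity|]. unfold cre at 1. rewrite IH.
    change (S k <=? S m)%nat with (k <=? m)%nat. destruct (Nat.leb_spec k m) as [Hkm | Hkm].
    + replace (S m - S k)%nat with (m - k)%nat by lia.
      rewrite beta_k0_succ_r. replace (m - k + k)%nat with m by lia. C_eq.
    + C_eq.
Qed.

Lemma Aop_band (k : nat) (xi : C) (f : nat -> R) :
  Aop k xi f = band k (fun n => (Cconj xi * beta_k0 k n)%C) f.
Proof.
  apply functional_extensionality. intros x. apply functional_extensionality. intros n.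
  unfold Aop, band, lower, upper. rewrite iter_ann, iter_cre.
  destruct (k <=? n)%nat; C_eq.
Qed.

Lemma beta_k0_le (k n : nat) : (k <= 2)%nat -> beta_k0 k n <= 2 * INR (S n).
Proof.
  intros Hk. unfold beta_k0.
  rewrite <- (sqrt_pow2 (2 * INR (S n))) by (pose proof (pos_INR (S n)); lra).
  apply sqrt_le_1_alt. replace ((2 * INR (S n)) ^ 2) with (INR (4 * S n * S n)).
  - apply le_INR. destruct k as [|[|[|k]]]; simpl; nia.
  - rewrite !mult_INR. simpl INR at 1. ring.
Qed.

Theorem proposition3p1 (k : nat) (xi : C) (f : nat -> R)
  (hk : k = 1%nat \/ k = 2%nat)
  (hf : forall n, (0 <= f n)%R)
  (hC : exists Cc : R, (0 < Cc)%R /\ forall n : nat, (f n <= Cc * beta_k0 k n)%R) :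
  ess_self_adjoint (A_graph k xi f).
Proof.
  unfold A_graph. rewrite Aop_band.
  apply (ess_self_adjoint_band k _ f (2 * Cmod xi)). intros n.
  rewrite Cmod_mult, Cmod_conj, Cmod_R, Rabs_pos_eq by apply sqrt_pos.
  replace (2 * Cmod xi * INR (S n)) with (Cmod xi * (2 * INR (S n))) by ring.
  apply Rmult_le_compat_l; [apply Cmod_ge_0|].
  apply beta_k0_le. lia.
Qed.
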